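(* Let $G=(V,E)$ be a temporal network with $m=|E|$ temporal edges, let $\alpha$ be the degeneracy of $G_S$, let $\pi$ be a degeneracy ordering of $G_S$, and let $\delta\ge 0$. Consider the procedure OutNeighbours, which for every pair $(u,v)$ with $\{u,v\}\in E(G_S)$ and $\pi(u)<\pi(v)$, and every $w\in N^{+}_{\pi}(u)$ adjacent to $v$, does the following: (i) with $L_1=E_{u,v}$, $L_2=E_{u,w}$, $L_3=E_{v,w}$, it computes for every $e\in L_1$ the first edge $L_{12}[e]$ of $L_2$ with timestamp at least $t(e)$ by a single merged linear scan of $L_1$ and $L_2$, computes for every $f\in L_2$ the first edge $L_{23}[f]$ of $L_3$ with timestamp at least $t(f)$ by binary search in $L_3$, and for each $e\in L_1$ increments out-count$[e]$ if $t(e)\le t(L_{12}[e])\le t(L_{23}[L_{12}[e]])\le t(e)+\delta$; (ii) with $L_1'=E_{v,u}$, $L_2'=E_{v,w}$, $L_3'=E_{u,w}$, it computes for every $e\in L_1'$ the last edge $L_{13}[e]$ of $L_3'$ with timestamp at most $t(e)+\delta$ by a single merged linear scan of $L_1'$ and $L_3'$, computes the first edge $L_{12}[e]$ of $L_2'$ with timestamp at least $t(e)$ by binary search in $L_2'$, and increments out-count$[e]$ if $t(e)\le t(L_{12}[e])\le t(L_{13}[e])\le t(e)+\delta$. Then OutNeighbours runs in time $O(m\,\alpha\log\sigma_{\max})$.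
   Context: A temporal network $G=(V,E)$ is a finite multiset of temporal edges $(x,y,t)$ with $x\neq y\in V$ and timestamp $t=t(e)\in\mathbb{R}$ (from $x$ to $y$; parallel edges in both directions allowed). For distinct $x,y$, $E_{x,y}$ is the list of temporal edges from $x$ to $y$ sorted by increasing timestamp, and $\sigma(x,y)$ is the number of temporal edges with endpoints $x$ and $y$ (either direction); $\sigma_{\max}=\max_{x,y}\sigma(x,y)$. $G_S$ is the simple undirected graph on $V$ with $\{x,y\}$ an edge iff some temporal edge joins $x$ and $y$; $N(x)$ is the neighbourhood of $x$ in $G_S$. For an ordering $\pi$ of $V$, $N^{+}_{\pi}(x)=\{y\in N(x):\pi(x)<\pi(y)\}$. The degeneracy $\alpha$ of $G_S$ is the smallest integer such that some ordering $\pi$ of $V$ satisfies $|N^{+}_{\pi}(x)|\le\alpha$ for all $x$; such an ordering is a degeneracy ordering. Computational model: each list $E_{x,y}$ can be accessed in $O(1)$ time and adjacency in $G_S$ can be tested in $O(1)$ time. *)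

From HB Require Import structures.
From mathcomp Require Import all_boot all_order all_algebra.
Set Implicit Arguments. Unset Strict Implicit. Unset Printing Implicit Defensive.
Import Order.TTheory GRing.Theory Num.Theory.

Section Temporal.
Variables (V : finType) (R : realDomainType).
(* A temporal network: a finite multiset (list) of temporal edges (x, y, t).
   Temporal edges are identified by their index in this list. *)
Variable E : seq (V * V * R).

Definition tE (i : nat) : R := nth 0%R [seq e.2 | e <- E] i.

Definition is_from (x y : V) (i : nat) : bool :=
  if nth None [seq Some e | e <- E] i is Some e
  then (e.1.1 == x) && (e.1.2 == y) else false.

Definition Elist (x y : V) : seq nat :=
  sort (fun i j => (tE i <= tE j)%R) [seq i <- iota 0 (size E) | is_from x y i].

Definition joins (x y : V) (e : V * V * R) : bool :=
  ((e.1.1 == x) && (e.1.2 == y)) || ((e.1.1 == y) && (e.1.2 == x)).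

Definition sigma (x y : V) : nat := count (joins x y) E.
Definition sigma_max : nat := \max_(x : V) \max_(y : V | x != y) sigma x y.

Definition adj (x y : V) : bool := (x != y) && has (joins x y) E.
Definition Nb (x : V) : {set V} := [set y | adj x y].
(* orderings of V are injective maps V -> nat (only relative order matters) *)
Definition Nplus (pi : V -> nat) (x : V) : {set V} := [set y in Nb x | pi x < pi y].

Definition bounded_ordering (pi : V -> nat) (a : nat) : Prop :=
  injective pi /\ forall x, #|Nplus pi x| <= a.

Definition is_degeneracy (a : nat) : Prop :=
  (exists pi, bounded_ordering pi a) /\
  (forall pi b, bounded_ordering pi b -> a <= b).

Definition degeneracy_ordering (pi : V -> nat) (a : nat) : Prop :=
  bounded_ordering pi a.

(* ---------- cost-instrumented primitives (result, number of steps) ---------- *)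

Fixpoint dropLt (x : R) (s : seq nat) : seq nat * nat :=
  match s with
  | [::] => ([::], 0)
  | f :: s' => if (tE f < x)%R then let: (r, c) := dropLt x s' in (r, c.+1)
               else (s, 0)
  end.

Fixpoint mergeFirst (L1 L2 : seq nat) : seq (option nat) * nat :=
  match L1 with
  | [::] => ([::], 1)
  | e :: L1' => let: (L2', c) := dropLt (tE e) L2 in
                let: (r, c') := mergeFirst L1' L2' in
                (ohead L2' :: r, c + 1 + c')
  end.

Fixpoint advLe (b : R) (last : option nat) (s : seq nat)
    : option nat * seq nat * nat :=
  match s with
  | [::] => (last, [::], 0)
  | f :: s' => if (tE f <= b)%R then let: (l, r, c) := advLe b (Some f) s' in
                                   (l, r, c.+1)
               else (last, s, 0)
  end.

Fixpoint mergeLast (d : R) (last : option nat) (L1 L3 : seq nat)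
    : seq (option nat) * nat :=
  match L1 with
  | [::] => ([::], 1)
  | e :: L1' => let: (l, L3', c) := advLe (tE e + d) last L3 in
                let: (r, c') := mergeLast d l L1' L3' in
                (l :: r, c + 1 + c')
  end.

(* binary search (random access to lists is O(1)): least index in [lo,hi)
   whose timestamp is >= x; cost = number of probes *)
Fixpoint bsearch_aux (L : seq nat) (x : R) (fuel lo hi : nat) : nat * nat :=
  match fuel with
  | 0 => (lo, 0)
  | fuel'.+1 =>
    if lo < hi then
      let mid := (lo + hi)./2 in
      let: (r, c) := if (tE (nth 0 L mid) < x)%R
                     then bsearch_aux L x fuel' mid.+1 hi
                     else bsearch_aux L x fuel' lo mid in
      (r, c.+1)
    else (lo, 1)
  end.

Definition bsearch (L : seq nat) (x : R) : option nat * nat :=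
  let: (i, c) := bsearch_aux L x (size L).+1 0 (size L) in
  (nth None [seq Some f | f <- L] i, c).

(* step (i) for the triangle (u,v,w): returns the list of edges whose
   out-count is incremented, and the cost *)
Definition part1 (d : R) (u v w : V) : seq nat * nat :=
  let L1 := Elist u v in let L2 := Elist u w in let L3 := Elist v w in
  let: (r12, c12) := mergeFirst L1 L2 in
  let c23 := \sum_(f <- L2) (bsearch L3 (tE f)).2 in
  let L23 f := (bsearch L3 (tE f)).1 in
  let ok e o := if o is Some f then
                  (if L23 f is Some g then
                     [&& tE e <= tE f, tE f <= tE g & tE g <= tE e + d]%R
                   else false)
                else false in
  ([seq p.1 | p <- [seq p <- zip L1 r12 | ok p.1 p.2]], c12 + c23 + size L1).

Definition part2 (d : R) (u v w : V) : seq nat * nat :=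
  let L1 := Elist v u in let L2 := Elist v w in let L3 := Elist u w in
  let: (r13, c13) := mergeLast d None L1 L3 in
  let c12 := \sum_(e <- L1) (bsearch L2 (tE e)).2 in
  let ok e o := if (bsearch L2 (tE e)).1 is Some f then
                  (if o is Some g then
                     [&& tE e <= tE f, tE f <= tE g & tE g <= tE e + d]%R
                   else false)
                else false in
  ([seq p.1 | p <- [seq p <- zip L1 r13 | ok p.1 p.2]], c13 + c12 + size L1).

(* work for one pair (u,v): loop over w in N^+(u), O(1) adjacency test *)
Definition pair_work (pi : V -> nat) (d : R) (u v : V) : seq nat * nat :=
  foldr (fun w acc =>
           let: (inc, c) := acc in
           if adj v w then
             let: (i1, c1) := part1 d u v w in
             let: (i2, c2) := part2 d u v w in
             (i1 ++ i2 ++ inc, c1 + c2 + c.+1)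
           else (inc, c.+1))
        ([::], 1) (enum (Nplus pi u)).

Definition pairs (pi : V -> nat) : seq (V * V) :=
  flatten [seq [seq (u, v) | v <- enum V & adj u v && (pi u < pi v)] | u <- enum V].

(* OutNeighbours: (multiset of increments of out-count, total running time) *)
Definition OutNeighbours (pi : V -> nat) (d : R) : seq nat * nat :=
  foldr (fun p acc =>
           let: (inc, c) := acc in
           let: (i', c') := pair_work pi d p.1 p.2 in
           (i' ++ inc, c' + c))
        ([::], 0) (pairs pi).

Definition out_count (pi : V -> nat) (d : R) (e : nat) : nat :=
  count_mem e (OutNeighbours pi d).1.

Definition running_time (pi : V -> nat) (d : R) : nat := (OutNeighbours pi d).2.

End Temporal.

From HB Require Import structures.
From mathcomp Require Import all_boot all_order all_algebra zify.
Import Order.TTheory GRing.Theory Num.Theory.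
Set Implicit Arguments. Unset Strict Implicit. Unset Printing Implicit Defensive.

(* For a triangle (u, v, w) with v, w in N^+(u), the two merged scans cost
   O(|E_{u,v}| + |E_{v,u}| + |E_{u,w}|) and each of the |E_{u,w}| + |E_{v,u}|
   binary searches, in a list of length at most sigma_max, costs
   O(log sigma_max).  Charge this work to temporal edges: an edge joining u
   and v, pi u < pi v, is charged once for every w in N^+(u), and an edge of
   E_{u,w} once for every v in N^+(u); both happen at most alpha times, and
   every temporal edge belongs to at most one such oriented pair.  Only the
   out-degree bound |N^+(u)| <= alpha of pi is needed, not its optimality. *)

Lemma sum_count_mem (T : finType) (P : pred T) (s : seq T) :
  \sum_(x | P x) count_mem x s = count P s.
Proof.
elim: s => [|a s IH] /=; first by rewrite big1.
rewrite big_split /= IH; congr (_ + _).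
rewrite big_mkcond (bigD1 a) //= eqxx big1 ?addn0; first by case: (P a).
by move=> x /negbTE; rewrite eq_sym => ->; case: (P x).
Qed.

Section OutNeighboursCost.
Variables (V : finType) (R : realDomainType) (E : seq (V * V * R)).

Lemma dropLt_cost_size x s : (dropLt E x s).2 + size (dropLt E x s).1 = size s.
Proof.
elim: s => [|f s IH] //=; case: ifP => _ //=.
by move: IH; case: dropLt => r c /= <-; rewrite addSn.
Qed.

Lemma mergeFirst_cost L1 L2 : (mergeFirst E L1 L2).2 <= size L1 + size L2 + 1.
Proof.
elim: L1 L2 => [|e L1 IH] L2 /=; first by rewrite addnC leq_addr.
have := dropLt_cost_size (tE E e) L2; case: dropLt => L2' c /= <-.
by have := IH L2'; case: mergeFirst => r c' /=; lia.
Qed.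

Lemma advLe_cost_size b l s : (advLe E b l s).2 + size (advLe E b l s).1.2 = size s.
Proof.
elim: s l => [|f s IH] l //=; case: ifP => _ //=.
by move: (IH (Some f)); case: advLe => [[l' r] c] /= <-; rewrite addSn.
Qed.

Lemma mergeLast_cost d l L1 L3 : (mergeLast E d l L1 L3).2 <= size L1 + size L3 + 1.
Proof.
elim: L1 l L3 => [|e L1 IH] l L3 /=; first by rewrite addnC leq_addr.
have := advLe_cost_size (tE E e + d) l L3; case: advLe => [[l' L3'] c] /= <-.
by have := IH l' L3'; case: mergeLast => r c' /=; lia.
Qed.

Lemma bsearch_aux_cost L x fuel lo hi k :
  hi - lo < 2 ^ k -> (bsearch_aux E L x fuel lo hi).2 <= k.+1.
Proof.
elim: fuel lo hi k => [|fuel IH] lo hi k range //=.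
case: (ltnP lo hi) => // lo_hi; case: k range => [|k]; first by rewrite expn0; lia.
rewrite expnS => range.
have halve lo' hi' : hi' - lo' <= (hi - lo)./2 -> (bsearch_aux E L x fuel lo' hi').2 <= k.+1.
  by move=> h; apply: IH; lia.
case: ifP => _.
  by have := halve ((lo + hi)./2).+1 hi; case: bsearch_aux => r c /= h; apply: h; lia.
by have := halve lo (lo + hi)./2; case: bsearch_aux => r c /= h; apply: h; lia.
Qed.

Lemma bsearch_cost L x s : size L <= s -> (bsearch E L x).2 <= (trunc_log 2 s).+2.
Proof.
move=> Ls; rewrite /bsearch.
have := @bsearch_aux_cost L x (size L).+1 0 (size L) (trunc_log 2 s).+1.
case: bsearch_aux => i c /= h; apply: h.
by rewrite subn0; apply: leq_ltn_trans Ls (trunc_log_ltn _ _).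
Qed.

Lemma sum_bsearch_cost (T : Type) (F : seq T) (key : T -> R) L s : size L <= s ->
  \sum_(f <- F) (bsearch E L (key f)).2 <= size F * (trunc_log 2 s).+2.
Proof.
move=> Ls; rewrite -sum1_size big_distrl /=.
by apply: leq_sum => f _; rewrite mul1n bsearch_cost.
Qed.

Definition Ecount (x y : V) : nat := count_mem (x, y) [seq e.1 | e <- E].

Lemma size_Elist x y : size (Elist E x y) = Ecount x y.
Proof.
rewrite size_sort size_filter /Ecount count_map.
rewrite -[in RHS](mkseq_nth (x, x, 0%R) E) /mkseq count_map.
apply: eq_in_count => i; rewrite mem_iota add0n => /andP[_ iE] /=.
by rewrite /is_from (nth_map (x, x, 0%R)) // -xpair_eqE.
Qed.

Lemma sigmaE x y : x != y -> sigma E x y = Ecount x y + Ecount y x.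
Proof.
move=> xy; rewrite /sigma /Ecount !count_map -count_predUI.
rewrite (@eq_count _ (predI _ _) pred0) ?count_pred0 ?addn0 => [|[[a b] t]] /=.
  by apply: eq_count => -[[a b] t]; rewrite /joins /= !xpair_eqE.
rewrite !xpair_eqE; apply/negP => /andP[/andP[/eqP-> _] /andP[/eqP xy' _]].
by rewrite xy' eqxx in xy.
Qed.

Lemma adj_sigma_gt0 x y : adj E x y -> 0 < sigma E x y.
Proof. by case/andP => _; rewrite has_count. Qed.

Lemma size_Elist_le_sigma_max x y : x != y -> size (Elist E x y) <= sigma_max E.
Proof.
move=> xy; rewrite size_Elist; apply: (@leq_trans (sigma E x y)).
  by rewrite sigmaE // leq_addr.
apply: leq_trans (leq_bigmax x).
exact: (@leq_bigmax_cond _ (fun y' => x != y') (sigma E x) y xy).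
Qed.

Lemma sum_Ecount_oriented (pi : V -> nat) :
  \sum_u \sum_(v | pi u < pi v) (Ecount u v + Ecount v u) <= size E.
Proof.
rewrite (eq_bigr _ (fun u _ => big_split _ _ _ _ _)) big_split /=.
rewrite [X in _ + X](exchange_big_dep xpredT) //=.
rewrite !pair_big_dep /= /Ecount.
under eq_bigr do rewrite -surjective_pairing.
under [X in _ + X]eq_bigr do rewrite -surjective_pairing.
rewrite !sum_count_mem -count_predUI (@eq_count _ (predI _ _) pred0) => [|p /=].
  by rewrite count_pred0 addn0 -(size_map fst) count_size.
by case: ltngtP.
Qed.

Lemma in_Nplus pi u v : (v \in Nplus E pi u) = adj E u v && (pi u < pi v).
Proof. by rewrite !inE. Qed.

Lemma sum_Nplus_le_size pi (F : V -> V -> nat) :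
    (forall u v, v \in Nplus E pi u -> F u v <= Ecount u v + Ecount v u) ->
  \sum_u \sum_(v in Nplus E pi u) F u v <= size E.
Proof.
move=> F_le; apply: leq_trans (sum_Ecount_oriented pi); apply: leq_sum => u _.
rewrite big_mkcond [X in _ <= X]big_mkcond; apply: leq_sum => v _ /=.
case: ifP => // vN; apply: leq_trans (F_le _ _ vN) _.
by move: vN; rewrite in_Nplus => /andP[_ ->].
Qed.

Lemma sum_sigma_Nplus pi : \sum_u \sum_(v in Nplus E pi u) sigma E u v <= size E.
Proof.
apply: sum_Nplus_le_size => u v; rewrite in_Nplus => /andP[/andP[uv _] _].
by rewrite sigmaE.
Qed.

Lemma sum_Ecount_Nplus pi : \sum_u \sum_(v in Nplus E pi u) Ecount u v <= size E.
Proof. by apply: sum_Nplus_le_size => u v _; rewrite leq_addr. Qed.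

Lemma part1_cost d u v w s : size (Elist E v w) <= s ->
  (part1 E d u v w).2 <= 2 * size (Elist E u v) + size (Elist E u w) * (trunc_log 2 s).+3 + 1.
Proof.
move=> vw_s; rewrite /part1.
have := sum_bsearch_cost (Elist E u w) (tE E) vw_s.
have := mergeFirst_cost (Elist E u v) (Elist E u w).
case: mergeFirst => r c /=; nia.
Qed.

Lemma part2_cost d u v w s : size (Elist E v w) <= s ->
  (part2 E d u v w).2 <= size (Elist E v u) * (trunc_log 2 s).+4 + size (Elist E u w) + 1.
Proof.
move=> vw_s; rewrite /part2.
have := sum_bsearch_cost (Elist E v u) (tE E) vw_s.
have := mergeLast_cost d None (Elist E v u) (Elist E u w).
case: mergeLast => r c /=; nia.
Qed.

Local Notation log_sigma := (trunc_log 2 (sigma_max E)).+1.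

Lemma triangle_cost d u v w : u != v -> adj E v w ->
  (part1 E d u v w).2 + (part2 E d u v w).2 <= (sigma E u v + Ecount u w + 1) * (4 * log_sigma).
Proof.
move=> uv /andP[vw _]; have vw_sigma := size_Elist_le_sigma_max vw.
have := part1_cost d u vw_sigma; have := part2_cost d u vw_sigma.
rewrite sigmaE // !size_Elist; nia.
Qed.

Lemma pair_work_cost pi d u v (B : V -> nat) :
    (forall w, adj E v w -> (part1 E d u v w).2 + (part2 E d u v w).2 <= B w) ->
  (pair_work E pi d u v).2 <= 1 + \sum_(w in Nplus E pi u) (B w).+1.
Proof.
move=> B_ge; rewrite -big_enum /pair_work; elim: (enum _) => [|w s IH] /=.
  by rewrite big_nil.
rewrite big_cons; move: IH; case: foldr => inc c /= IH.
case: ifP => vw /=; last by lia.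
by have := B_ge w vw; case: part1 => i1 c1; case: part2 => i2 c2 /=; lia.
Qed.

Lemma pair_work_cost_le pi d u v a : v \in Nplus E pi u -> #|Nplus E pi u| <= a ->
  (pair_work E pi d u v).2 <=
    log_sigma * (10 * a * sigma E u v + 4 * \sum_(w in Nplus E pi u) Ecount u w).
Proof.
move=> vN deg; have a_gt0 : 0 < a by apply: leq_trans deg; apply/card_gt0P; exists v.
move: vN; rewrite in_Nplus => /andP[uv_adj _]; have /andP[uv _] := uv_adj.
have sigma_gt0 := adj_sigma_gt0 uv_adj.
apply: leq_trans (pair_work_cost pi (fun w vw => triangle_cost d uv vw)) _.
set l := log_sigma; set sg := sigma E u v.
rewrite (eq_bigr (fun w => (1 + (sg + 1) * (4 * l)) + 4 * l * Ecount u w)) => [|w _]; last by nia.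
rewrite big_split sum_nat_const -big_distrr /=.
have per_w : #|Nplus E pi u| * (1 + (sg + 1) * (4 * l)) <= a * (9 * (l * sg)).
  by apply: leq_mul => //; nia.
have overhead : 0 < a * (l * sg) by rewrite !muln_gt0 a_gt0 sigma_gt0.
nia.
Qed.

Lemma running_time_sum pi d :
  running_time E pi d = \sum_(p <- pairs E pi) (pair_work E pi d p.1 p.2).2.
Proof.
rewrite /running_time /OutNeighbours; elim: (pairs E pi) => [|p s IH] /=.
  by rewrite big_nil.
by rewrite big_cons -IH; case: foldr => inc c; case: pair_work.
Qed.

Lemma sum_pairs pi (F : V * V -> nat) :
  \sum_(p <- pairs E pi) F p = \sum_u \sum_(v in Nplus E pi u) F (u, v).
Proof.
rewrite /pairs big_flatten big_map big_enum /=; apply: eq_bigr => u _.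
by rewrite big_map big_filter big_enum_cond; apply: eq_bigl => v; rewrite in_Nplus.
Qed.

Lemma sum_card_Nplus_Ecount pi a : (forall u, #|Nplus E pi u| <= a) ->
  \sum_u #|Nplus E pi u| * \sum_(w in Nplus E pi u) Ecount u w <= a * size E.
Proof.
move=> outdeg; apply: (@leq_trans (\sum_u a * \sum_(w in Nplus E pi u) Ecount u w)).
  by apply: leq_sum => u _; rewrite leq_mul2r outdeg orbT.
by rewrite -big_distrr leq_mul2l sum_Ecount_Nplus orbT.
Qed.

Lemma running_time_le pi d a : (forall u, #|Nplus E pi u| <= a) ->
  running_time E pi d <= 14 * (size E * a * log_sigma).
Proof.
move=> outdeg; pose T u := \sum_(w in Nplus E pi u) Ecount u w.
rewrite running_time_sum sum_pairs.
apply: (@leq_trans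
  (\sum_u \sum_(v in Nplus E pi u) log_sigma * (10 * a * sigma E u v + 4 * T u))).
  by apply: leq_sum => u _; apply: leq_sum => v vN; apply: pair_work_cost_le.
under eq_bigr do rewrite -big_distrr big_split /= -big_distrr sum_nat_const mulnCA.
rewrite -big_distrr big_split /= -big_distrr -big_distrr /=.
apply: (@leq_trans (log_sigma * (10 * a * size E + 4 * (a * size E)))); last by nia.
by rewrite leq_mul2l leq_add ?leq_mul ?sum_sigma_Nplus ?sum_card_Nplus_Ecount ?orbT.
Qed.

End OutNeighboursCost.

Theorem theorem3p3 :
  exists C : nat,
  forall (V : finType) (R : realDomainType) (E : seq (V * V * R)),
    all (fun e => e.1.1 != e.1.2) E ->
  forall alpha : nat, is_degeneracy E alpha ->
  forall pi : V -> nat, degeneracy_ordering E pi alpha ->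
  forall delta : R, (0 <= delta)%R ->
    running_time E pi delta
      <= C * (size E * alpha * (trunc_log 2 (sigma_max E)).+1).
Proof.
exists 14 => V R E _ alpha _ pi [_ outdeg] delta _.
exact: running_time_le outdeg.
Qed.
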